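(* Let $\Sigma$ be an alphabet and $\mathcal{A}$ a reversible weighted automaton over $\mathbb{F}_2$ and $\Sigma$ with precisely one initial state. Then $\|\mathcal{A}\|=\underline{L}$ (characteristic series over $\mathbb{F}_2$) for some $L\in\mathrm{RevL}_1(\mathbb{B},\Sigma)$. As a consequence, $\mathrm{RevL}_1(\mathbb{F}_2,\Sigma)=\mathrm{RevL}_1(\mathbb{B},\Sigma)$.
   Context: $\mathbb{F}_2$ is the two-element field and $\mathbb{B}=(\{0,1\},\lor,\land,0,1)$ the Boolean semiring. For a semiring $S$ and finite nonempty alphabet $\Sigma$, a series is a map $r\colon\Sigma^*\to S$ with value $(r,w)$, support $\mathrm{supp}(r)=\{w\mid(r,w)\neq0\}$; the characteristic series $\underline{L}$ of $L\subseteq\Sigma^*$ has coefficient $1$ on $L$ and $0$ elsewhere. A weighted automaton over $S$ and $\Sigma$ is $\mathcal{A}=(Q,\sigma,\iota,\tau)$ with $Q$ finite, $\sigma\colon Q\times\Sigma\times Q\to S$, $\iota,\tau\colon Q\to S$; a run on $w=a_1\cdots a_t$ is $q_0a_1q_1\cdots a_tq_t$ with all $\sigma(q_{k-1},a_k,q_k)\neq0$, of weight $\iota(q_0)\sigma(q_0,a_1,q_1)\cdots\sigma(q_{t-1},a_t,q_t)\tau(q_t)$, and $(\|\mathcal{A}\|,w)$ is the sum of weights of all runs on $w$. An initial state is a state $q$ with $\iota(q)\neq0$. $\mathcal{A}$ is reversible if for all $p,p',q,q'\in Q$, $a\in\Sigma$: $\sigma(p,a,q)\neq0\neq\sigma(p,a,q')$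 implies $q=q'$, and $\sigma(p,a,q)\neq0\neq\sigma(p',a,q)$ implies $p=p'$. $\mathrm{RevL}_1(S,\Sigma)$ is the set of supports of series realised by reversible weighted automata over $S$ and $\Sigma$ with precisely one initial state. *)

From HB Require Import structures.
From mathcomp Require Import all_boot all_order all_algebra.
Set Implicit Arguments. Unset Strict Implicit. Unset Printing Implicit Defensive.
Import GRing.Theory.
Local Open Scope ring_scope.

Definition boolSR : Type := bool.
HB.instance Definition _ := Choice.on boolSR.

Lemma boolSR_one_neq0 : (true : boolSR) != false. Proof. by []. Qed.

HB.instance Definition _ := GRing.isNzSemiRing.Build boolSR
  orbA orbC orFb andbA andTb andbT andb_orl andb_orr andFb andbF boolSR_one_neq0.

Record wautomaton (S : nzSemiRingType) (Sig : finType) (Q : finType) := WAut {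
  wsigma : Q -> Sig -> Q -> S;
  wiota  : Q -> S;
  wtau   : Q -> S }.

Section Semantics.
Variables (S : nzSemiRingType) (Sig Q : finType) (A : wautomaton S Sig Q).

Definition is_run (w : seq Sig) (qs : (size w).+1.-tuple Q) : bool :=
  [forall k : 'I_(size w),
     wsigma A (tnth qs (inord k)) (tnth (in_tuple w) k) (tnth qs (inord k.+1)) != 0].

Definition run_weight (w : seq Sig) (qs : (size w).+1.-tuple Q) : S :=
  wiota A (tnth qs ord0) *
  (\prod_(k < size w)
     wsigma A (tnth qs (inord k)) (tnth (in_tuple w) k) (tnth qs (inord k.+1))) *
  wtau A (tnth qs ord_max).

Definition behaviour (w : seq Sig) : S :=
  \sum_(qs : (size w).+1.-tuple Q | is_run qs) run_weight qs.

Definition reversible : Prop :=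
  (forall (p q q' : Q) (a : Sig),
      wsigma A p a q != 0 -> wsigma A p a q' != 0 -> q = q') /\
  (forall (p p' q : Q) (a : Sig),
      wsigma A p a q != 0 -> wsigma A p' a q != 0 -> p = p').

Definition one_initial : Prop := #|[pred q : Q | wiota A q != 0]| = 1%N.

End Semantics.

Definition language (Sig : finType) := seq Sig -> bool.

Definition char_series (S : nzSemiRingType) (Sig : finType) (L : language Sig)
  : seq Sig -> S := fun w => if L w then 1 else 0.

Definition RevL1 (S : nzSemiRingType) (Sig : finType) (L : language Sig) : Prop :=
  exists (Q : finType) (A : wautomaton S Sig Q),
    reversible A /\ one_initial A /\
    forall w : seq Sig, L w = (behaviour A w != 0).

(** In a weighted automaton that is deterministic and has a single initial
    state, every word has at most one run of nonzero weight, so the behaviour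
    on a word is either 0 or the weight of that run, a product of transition
    weights.  Hence the support of the behaviour is unchanged when all weights
    are pushed along a multiplicative map that preserves and reflects 0, such
    as x |-> (x != 0) from F_2 to B and its section B -> F_2; such a map also
    preserves reversibility and the uniqueness of the initial state.  Finally,
    an F_2-series is the characteristic series of its support, since F_2 has
    no values besides 0 and 1. *)
From HB Require Import structures.
From mathcomp Require Import all_boot all_order all_algebra.
Set Implicit Arguments. Unset Strict Implicit. Unset Printing Implicit Defensive.
Import GRing.Theory.
Local Open Scope ring_scope.

Section UniqueRun.
Variables (S : nzSemiRingType) (Sig Q : finType) (A : wautomaton S Sig Q).

Definition deterministic : Prop :=
  forall (p q q' : Q) (a : Sig),
    wsigma A p a q != 0 -> wsigma A p a q' != 0 -> q = q'.

Lemma reversible_deterministic : reversible A -> deterministic.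
Proof. by case. Qed.

Lemma one_initial_eq (p q : Q) :
  one_initial A -> wiota A p != 0 -> wiota A q != 0 -> p = q.
Proof.
move=> /eqP/card1P[x Ax] Ap Aq.
by move: (Ax p) (Ax q); rewrite !inE Ap Aq => /esym/eqP-> /esym/eqP->.
Qed.

Lemma run_weight_iota_neq0 (w : seq Sig) (qs : (size w).+1.-tuple Q) :
  run_weight A qs != 0 -> wiota A (tnth qs ord0) != 0.
Proof. by apply: contraNneq => iota0; rewrite /run_weight iota0 !mul0r. Qed.

Lemma deterministic_run_eq (w : seq Sig) (qs qs' : (size w).+1.-tuple Q) :
  deterministic -> is_run A qs -> is_run A qs' ->
  tnth qs ord0 = tnth qs' ord0 -> qs = qs'.
Proof.
move=> det /forallP run /forallP run' eq0.
have eq_prefix k : (k <= size w)%N -> tnth qs (inord k) = tnth qs' (inord k).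
  elim: k => [_ | k IHk lt_k]; first by rewrite -(inord_val ord0) in eq0.
  have := run (Ordinal lt_k); rewrite /= IHk ?(ltnW lt_k) // => step.
  exact: det step (run' (Ordinal lt_k)).
apply: eq_from_tnth => i; rewrite -[i]inord_val.
by apply: eq_prefix; rewrite -ltnS.
Qed.

Lemma behaviour_run (w : seq Sig) (qs : (size w).+1.-tuple Q) :
  deterministic -> one_initial A -> is_run A qs -> run_weight A qs != 0 ->
  behaviour A w = run_weight A qs.
Proof.
move=> det one run nz; rewrite /behaviour (bigD1 qs) //= big1 ?addr0 //.
move=> qs' /andP[run' neq]; apply: contraNeq neq => nz'; apply/eqP.
apply: deterministic_run_eq => //.
exact: one_initial_eq one (run_weight_iota_neq0 nz') (run_weight_iota_neq0 nz).
Qed.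

Lemma behaviour_neq0E (w : seq Sig) : deterministic -> one_initial A ->
  (behaviour A w != 0) =
  [exists qs : (size w).+1.-tuple Q, is_run A qs && (run_weight A qs != 0)].
Proof.
move=> det one; case: existsP => [[qs /andP[run nz]] | no_run].
  by rewrite (behaviour_run det one run nz).
rewrite /behaviour big1 ?eqxx // => qs run.
have [//|nz] := eqVneq (run_weight A qs) 0.
by case: no_run; exists qs; rewrite run nz.
Qed.

End UniqueRun.

Section MapWeights.
Variables (S T : nzSemiRingType) (h : S -> T).
Hypothesis h_monoid : monoid_morphism h.
Hypothesis h_eq0 : forall x, (h x == 0) = (x == 0).

Lemma h_neq0 x : (h x != 0) = (x != 0).
Proof. by rewrite h_eq0. Qed.

Variables (Sig Q : finType) (A : wautomaton S Sig Q).

Definition map_wautomaton : wautomaton T Sig Q :=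
  WAut (fun p a q => h (wsigma A p a q)) (h \o wiota A) (h \o wtau A).

Lemma map_deterministic : deterministic A -> deterministic map_wautomaton.
Proof. by move=> det p q q' a /=; rewrite !h_neq0; apply: det. Qed.

Lemma map_reversible : reversible A -> reversible map_wautomaton.
Proof.
case=> fwd bwd; split=> /= ? ? ? ?; rewrite !h_neq0; [exact: fwd | exact: bwd].
Qed.

Lemma map_one_initial : one_initial A -> one_initial map_wautomaton.
Proof.
by rewrite /one_initial => <-; apply: eq_card => q; rewrite !inE /= h_neq0.
Qed.

Lemma map_is_run (w : seq Sig) (qs : (size w).+1.-tuple Q) :
  is_run map_wautomaton qs = is_run A qs.
Proof. by apply: eq_forallb => k; rewrite /= h_neq0. Qed.

Lemma map_run_weight (w : seq Sig) (qs : (size w).+1.-tuple Q) :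
  run_weight map_wautomaton qs = h (run_weight A qs).
Proof.
have [h1 hM] := h_monoid.
by rewrite /run_weight /= !hM (big_morph h hM h1).
Qed.

Lemma map_behaviour_neq0 (w : seq Sig) : deterministic A -> one_initial A ->
  (behaviour map_wautomaton w != 0) = (behaviour A w != 0).
Proof.
move=> det one; rewrite (behaviour_neq0E w det one).
rewrite (behaviour_neq0E w (map_deterministic det) (map_one_initial one)).
by apply: eq_existsb => qs; rewrite map_is_run map_run_weight h_neq0.
Qed.

End MapWeights.

Lemma RevL1_map (S T : nzSemiRingType) (h : S -> T) (Sig : finType)
    (L : language Sig) :
  monoid_morphism h -> (forall x, (h x == 0) = (x == 0)) ->
  RevL1 S L -> RevL1 T L.
Proof.
move=> h_monoid h_eq0 [Q [A [rev [one supp]]]].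
exists Q, (map_wautomaton h A); split; first exact: map_reversible.
split=> [|w]; first exact: map_one_initial.
rewrite supp map_behaviour_neq0 //; exact: reversible_deterministic.
Qed.

Definition F2_to_bool (x : 'F_2) : boolSR := x != 0.
Definition bool_to_F2 (b : boolSR) : 'F_2 := if b then 1 else 0.

Lemma F2_to_bool_monoid : monoid_morphism F2_to_bool.
Proof.
by split=> [|x y]; rewrite /F2_to_bool ?oner_eq0 // mulf_eq0 negb_or.
Qed.

Lemma F2_to_bool_eq0 x : (F2_to_bool x == 0) = (x == 0).
Proof. by rewrite /F2_to_bool; case: (x == 0). Qed.

Lemma bool_to_F2_monoid : monoid_morphism bool_to_F2.
Proof.
by split=> // - [] []; rewrite /bool_to_F2 /= ?mul0r ?mulr0 ?mulr1.
Qed.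

Lemma bool_to_F2_eq0 b : (bool_to_F2 b == 0) = (b == 0).
Proof. by case: b; rewrite /bool_to_F2 ?oner_eq0. Qed.

Lemma F2_char_series_support (Sig : finType) (f : seq Sig -> 'F_2) w :
  f w = char_series 'F_2 (fun w => f w != 0) w.
Proof.
by rewrite /char_series; case: (f w) => [[|[|//]]] ?; apply: val_inj.
Qed.

Theorem proposition4 (Sig : finType) (hSig : (0 < #|Sig|)%N)
    (Q : finType) (A : wautomaton 'F_2 Sig Q) :
  reversible A -> one_initial A ->
  (exists L : language Sig,
      RevL1 boolSR L /\ forall w : seq Sig, behaviour A w = char_series 'F_2 L w) /\
  (forall L : language Sig, RevL1 'F_2 L <-> RevL1 boolSR L).
Proof.
have to_bool := RevL1_map F2_to_bool_monoid F2_to_bool_eq0.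
have to_F2 := RevL1_map bool_to_F2_monoid bool_to_F2_eq0.
move=> rev one; split=> [|L]; last by split; [apply: to_bool | apply: to_F2].
exists (fun w => behaviour A w != 0); split; last exact: F2_char_series_support.
by apply: to_bool; exists Q, A.
Qed.
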